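(* In the setting described in the context, suppose $p_i,p_j,p_k,p_l,p_u,p_w\in S_1$ satisfy $d(p_i,p_k)\ne d(p_j,p_l)$, $d(p_i,p_u)\ne d(p_j,p_w)$ and $d(p_k,p_u)\ne d(p_l,p_w)$. If $C_2$ is a conic, then $|C_{ij}\cap C_{kl}\cap C_{uw}|\le4$.
   Context: A plane algebraic curve is an infinite set $Z_{\mathbb{R}}(f)=\{(a,b)\in\mathbb{R}^2:f(a,b)=0\}$ for a nonzero $f\in\mathbb{R}[x,y]$; its degree is the minimal degree of such $f$; it is irreducible if $f$ can be chosen irreducible over $\mathbb{R}$. A conic is a curve of degree 2 that is not a union of two lines. Setting: $d\ge1$; $C_1=Z_{\mathbb{R}}(f_1)$ and $C_2=Z_{\mathbb{R}}(f_2)$ are irreducible plane algebraic curves of degree at most $d$ (possibly equal), with $f_1,f_2$ of minimum degree. $S_1=\{p_1,\dots,p_m\}\subset C_1$ and $S_2=\{q_1,\dots,q_n\}\subset C_2$ are sets of distinct points, $p_i=(a_i,b_i)$, satisfying: (1) neither $C_1$ nor $C_2$ is a vertical line; (2) $S_1\cap S_2=\emptyset$; (3) if $C_1$ (resp. $C_2$) is a circle, its center is not in $S_2$ (resp. $S_1$); (4) if $C_1$ (resp. $C_2$) is a circle, every concentric circle contains at most one point of $S_2$ (resp. $S_1$); (5) if $C_1$ (resp. $C_2$) is a line, then for every line $\ell$ parallel to it, the union of $\ell$ and its reflection in $C_1$ (resp. $C_2$) contains at most one point of $S_2$ (resp. $S_1$); (6) if $C_1$ (resp. $C_2$) is a line,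 every orthogonal line contains at most one point of $S_2$ (resp. $S_1$). For $1\le i,j\le m$, $C_{ij}\subset\mathbb{R}^4$ is the set of $(x,y,x',y')$ with $f_2(x,y)=0$, $f_2(x',y')=0$ and $(x-a_i)^2+(y-b_i)^2=(x'-a_j)^2+(y'-b_j)^2$. $d(\cdot,\cdot)$ is Euclidean distance. *)

From mathcomp Require Import all_boot all_order all_algebra.
From mathcomp Require Import mpoly.
From mathcomp Require Import reals.
Set Implicit Arguments.
Unset Strict Implicit.
Unset Printing Implicit Defensive.
Import GRing.Theory Num.Theory.
Local Open Scope ring_scope.

Section PlaneCurves.
Variable R : realType.

Definition pt := (R * R)%type.

Definition seteq (A B : pt -> Prop) := forall z, A z <-> B z.

(* evaluation of f in R[x,y] at (a,b): variable 0 is x, variable 1 is y *)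
Definition ev (f : {mpoly R[2]}) (z : pt) : R :=
  f.@[fun i : 'I_2 => if i == ord0 then z.1 else z.2].

(* total degree of a (nonzero) bivariate polynomial *)
Definition mdegree (f : {mpoly R[2]}) : nat := (msize f).-1.

(* irreducibility over R in R[x,y]: nonconstant, and every factorization has a
   constant (i.e. unit, since R is a field) factor *)
Definition irreducible_mpoly (f : {mpoly R[2]}) : Prop :=
  (0 < mdegree f)%N /\
  forall g h : {mpoly R[2]}, f = g * h -> mdegree g = 0%N \/ mdegree h = 0%N.

Definition zset (f : {mpoly R[2]}) : pt -> Prop := fun z => ev f z = 0.

Definition infinite_set (A : pt -> Prop) :=
  forall s : seq pt, exists z, A z /\ z \notin s.

Definition defining_poly (C : pt -> Prop) (f : {mpoly R[2]}) :=
  f != 0 /\ seteq C (zset f).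

Definition plane_curve (C : pt -> Prop) :=
  infinite_set C /\ exists f, defining_poly C f.

(* f defines C and has minimal degree among the defining polynomials of C;
   the degree of the curve C is then mdegree f *)
Definition min_degree_poly (C : pt -> Prop) (f : {mpoly R[2]}) :=
  defining_poly C f /\ forall g, defining_poly C g -> (mdegree f <= mdegree g)%N.

Definition irreducible_curve (C : pt -> Prop) :=
  plane_curve C /\ exists f, irreducible_mpoly f /\ seteq C (zset f).

Definition line_set (a b c : R) : pt -> Prop :=
  fun z => a * z.1 + b * z.2 + c = 0.

Definition is_line (C : pt -> Prop) :=
  exists a b c, (a, b) != (0, 0) /\ seteq C (line_set a b c).

Definition is_vertical_line (C : pt -> Prop) :=
  exists c : R, seteq C (fun z => z.1 = c).

Definition circle_set (x0 y0 r : R) : pt -> Prop :=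
  fun z => (z.1 - x0) ^+ 2 + (z.2 - y0) ^+ 2 = r ^+ 2.

Definition is_circle (C : pt -> Prop) :=
  exists x0 y0 r, 0 < r /\ seteq C (circle_set x0 y0 r).

Definition is_conic (C : pt -> Prop) :=
  plane_curve C /\
  (exists f, min_degree_poly C f /\ mdegree f = 2%N) /\
  ~ (exists L1 L2, is_line L1 /\ is_line L2 /\ seteq C (fun z => L1 z \/ L2 z)).

Definition reflect_pt (a b c : R) (z : pt) : pt :=
  let t := 2 * (a * z.1 + b * z.2 + c) / (a ^+ 2 + b ^+ 2) in
  (z.1 - t * a, z.2 - t * b).

Definition reflect_set (a b c : R) (A : pt -> Prop) : pt -> Prop :=
  fun z => exists w, A w /\ z = reflect_pt a b c w.

Definition at_most_one_of (n : nat) (s : 'I_n -> pt) (A : pt -> Prop) :=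
  forall k k' : 'I_n, A (s k) -> A (s k') -> k = k'.

(* conditions (3),(4) for the curve C and the point set S of the other curve *)
Definition circle_conditions (C : pt -> Prop) (n : nat) (s : 'I_n -> pt) :=
  forall x0 y0 r, 0 < r -> seteq C (circle_set x0 y0 r) ->
    (forall k, s k <> (x0, y0)) /\
    (forall r', 0 < r' -> at_most_one_of s (circle_set x0 y0 r')).

(* conditions (5),(6) for the curve C and the point set S of the other curve;
   the lines parallel to C = {a x + b y + c = 0} are the {a x + b y + c' = 0},
   the lines orthogonal to it are the {-b x + a y + c' = 0} *)
Definition line_conditions (C : pt -> Prop) (n : nat) (s : 'I_n -> pt) :=
  forall a b c, (a, b) != (0, 0) -> seteq C (line_set a b c) ->
    (forall c', at_most_one_of s
        (fun z => line_set a b c' z \/ reflect_set a b c (line_set a b c') z)) /\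
    (forall c', at_most_one_of s (line_set (- b) a c')).

Definition dist (z w : pt) : R :=
  Num.sqrt ((z.1 - w.1) ^+ 2 + (z.2 - w.2) ^+ 2).

Definition Cset (f2 : {mpoly R[2]}) (pi pj : pt) : (R * R * R * R) -> Prop :=
  fun v => let: (x, y, x', y') := v in
    ev f2 (x, y) = 0 /\ ev f2 (x', y') = 0 /\
    (x - pi.1) ^+ 2 + (y - pi.2) ^+ 2 = (x' - pj.1) ^+ 2 + (y' - pj.2) ^+ 2.

Definition card_le (A : (R * R * R * R) -> Prop) (k : nat) :=
  forall s : seq (R * R * R * R), uniq s -> (forall v, v \in s -> A v) ->
    (size s <= k)%N.

End PlaneCurves.

(* A point of [C_ij /\ C_kl /\ C_uw] is a pair [(z, z')] of points of the conic [C2] with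
   [|z - p_i| = |z' - p_j|], [|z - p_k| = |z' - p_l|] and [|z - p_u| = |z' - p_w|];
   subtracting these equations leaves two linear equations in [(z, z')].
   If they can be solved for [z'], then [z' = T z] for an affine map [T].  Since five points
   of a conic without three collinear points determine it, five solutions would make both
   [f2 o T] and [|z - p_i|^2 - |T z - p_j|^2] multiples of [f2]; a case analysis on the
   quadratic part [I - M^T M] of the latter rules this out unless [C2] is a circle about
   [p_i] or [|p_i - p_k| = |p_j - p_l|].  The same holds with [z] and [z'] exchanged.
   Otherwise [z] and [z'] each range over a line, which meets [C2] at most twice, leaving at
   most [2 * 2 = 4] pairs. *)

From mathcomp Require Import all_boot all_order all_algebra.
From mathcomp Require Import mpoly.
From mathcomp Require Import reals.
From mathcomp.algebra_tactics Require Import ring lra.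
Import Order.TTheory GRing.Theory Num.Theory.
Local Open Scope ring_scope.
Set Implicit Arguments.
Unset Strict Implicit.
Unset Printing Implicit Defensive.

Lemma mul_eq0_l (R : idomainType) (a b : R) : a * b = 0 -> b != 0 -> a = 0.
Proof. by move/eqP; rewrite mulf_eq0 => /orP [/eqP//|/eqP->]; rewrite eqxx. Qed.

Lemma mul_eq0_r (R : idomainType) (a b : R) : a * b = 0 -> a != 0 -> b = 0.
Proof. by rewrite mulrC => /mul_eq0_l. Qed.

(** * Plane quadrics *)

Section PlaneQuadrics.
Variable R : realFieldType.
Implicit Types (a b c : R) (u v z : R * R).

Record quad := Quad {qa : R; qb : R; qc : R; qd : R; qe : R; qf : R}.

Definition qev (q : quad) z : R :=
  qa q * z.1 ^+ 2 + qb q * z.1 * z.2 + qc q * z.2 ^+ 2 + qd q * z.1 + qe q * z.2 + qf q.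

Definition qlin (p : quad) (l : R) (q : quad) :=
  Quad (qa p - l * qa q) (qb p - l * qb q) (qc p - l * qc q)
       (qd p - l * qd q) (qe p - l * qe q) (qf p - l * qf q).

Lemma qlinE p l q z : qev (qlin p l q) z = qev p z - l * qev q z.
Proof. by rewrite /qev /=; ring. Qed.

Lemma qev_eq0_coef q : (forall z, qev q z = 0) ->
  [/\ qa q = 0, qb q = 0, qc q = 0, qd q = 0 & qe q = 0 /\ qf q = 0].
Proof.
case: q => a b c d e f /= H.
have := H (0, 0); have := H (1, 0); have := H (-1, 0).
have := H (0, 1); have := H (0, -1); have := H (1, 1).
by rewrite /qev /= => *; do ?split; lra.
Qed.

Definition cross u v := u.1 * v.2 - u.2 * v.1.
Definition psub u v : R * R := (u.1 - v.1, u.2 - v.2).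

Lemma pairP u v : u = v <-> u.1 = v.1 /\ u.2 = v.2.
Proof. by case: u => ? ?; case: v => ? ? /=; split => [[-> ->]|[-> ->]]. Qed.

Lemma pair_neq u v : u != v -> u.1 != v.1 \/ u.2 != v.2.
Proof.
move=> h; case: (eqVneq u.1 v.1) => [e1|]; last by left.
case: (eqVneq u.2 v.2) => [e2|]; last by right.
have uv : u = v by apply/pairP.
by rewrite uv eqxx in h.
Qed.

Lemma pair_neq0 a b : (a, b) != (0, 0) <-> a != 0 \/ b != 0.
Proof.
rewrite xpair_eqE negb_and; split; first by case/orP; [left|right].
by case=> ->; rewrite ?orbT.
Qed.

Lemma sqr_add_eq0 a b : a ^+ 2 + b ^+ 2 = 0 -> a = 0 /\ b = 0.
Proof. by move=> h; split; nra. Qed.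

Lemma sqr_norm_neq0 u v : u != v -> (u.1 - v.1) ^+ 2 + (u.2 - v.2) ^+ 2 != 0.
Proof.
move=> /pair_neq h; apply/eqP => /sqr_add_eq0 [h1 h2].
by case: h => /eqP; apply; lra.
Qed.

Definition no_three_collinear (Z : R * R -> Prop) :=
  forall z1 z2 z3, Z z1 -> Z z2 -> Z z3 -> z1 != z2 -> z3 != z1 -> z3 != z2 ->
  cross (psub z2 z1) (psub z3 z1) != 0.

Lemma no_three_collinear_progression Z z u : no_three_collinear Z -> u != (0, 0) ->
  Z z -> Z (z.1 + u.1, z.2 + u.2) -> Z (z.1 + 2 * u.1, z.2 + 2 * u.2) -> False.
Proof.
case: z u => [z1 z2] [u1 u2] nc /pair_neq0 hu h0 h1 h2.
have neq x y : x != y -> (z1 + x * u1, z2 + x * u2) != (z1 + y * u1, z2 + y * u2).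
  move=> /eqP hxy; apply/eqP => /pairP /= [e1 e2]; apply: hxy.
  by apply/eqP; rewrite -subr_eq0; apply/eqP; case: hu => hu; apply: (mul_eq0_l _ hu); lra.
have d1 : (z1, z2) != (z1 + u1, z2 + u2).
  by have := neq 0 1; rewrite !mul0r !mul1r !addr0; apply; rewrite eq_sym oner_eq0.
have d2 : (z1 + 2 * u1, z2 + 2 * u2) != (z1, z2).
  by have := neq 2 0; rewrite !mul0r !addr0; apply; rewrite pnatr_eq0.
have d3 : (z1 + 2 * u1, z2 + 2 * u2) != (z1 + u1, z2 + u2).
  by have := neq 2 1; rewrite !mul1r; apply; apply/eqP; lra.
have := nc _ _ _ h0 h1 h2 d1 d2 d3; rewrite /cross /psub /=.
suff -> : (z1 + u1 - z1) * (z2 + 2 * u2 - z2) - (z2 + u2 - z2) * (z1 + 2 * u1 - z1) = 0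
  by rewrite eqxx.
by ring.
Qed.

Lemma cross_eq0_of_line al be ga x y z : (al, be) != (0, 0) ->
  al * x.1 + be * x.2 = ga -> al * y.1 + be * y.2 = ga -> al * z.1 + be * z.2 = ga ->
  cross (psub y x) (psub z x) = 0.
Proof.
move=> /pair_neq0 hab hx hy hz; rewrite /cross /psub /=.
case: hab => h.
  apply: (mul_eq0_r (a := al)) => //.
  transitivity ((z.2 - x.2) * ((al * y.1 + be * y.2) - (al * x.1 + be * x.2)) -
    (y.2 - x.2) * ((al * z.1 + be * z.2) - (al * x.1 + be * x.2))); first by ring.
  by rewrite hx hy hz; ring.
apply: (mul_eq0_r (a := be)) => //.
transitivity ((y.1 - x.1) * ((al * z.1 + be * z.2) - (al * x.1 + be * x.2)) -
  (z.1 - x.1) * ((al * y.1 + be * y.2) - (al * x.1 + be * x.2))); first by ring.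
by rewrite hx hy hz; ring.
Qed.

Lemma affine_eq0_of_noncollinear al be ga x y z :
  cross (psub y x) (psub z x) != 0 ->
  al * x.1 + be * x.2 + ga = 0 -> al * y.1 + be * y.2 + ga = 0 ->
  al * z.1 + be * z.2 + ga = 0 -> forall w, al * w.1 + be * w.2 + ga = 0.
Proof.
rewrite /cross /psub /= => hc hx hy hz w.
have ha : al = 0.
  apply: (mul_eq0_l _ hc).
  transitivity ((z.2 - x.2) * (al * y.1 + be * y.2 + ga - (al * x.1 + be * x.2 + ga)) -
     (y.2 - x.2) * (al * z.1 + be * z.2 + ga - (al * x.1 + be * x.2 + ga))); first by ring.
  by rewrite hx hy hz; ring.
have hb : be = 0.
  apply: (mul_eq0_l _ hc).
  transitivity ((y.1 - x.1) * (al * z.1 + be * z.2 + ga - (al * x.1 + be * x.2 + ga)) -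
     (z.1 - x.1) * (al * y.1 + be * y.2 + ga - (al * x.1 + be * x.2 + ga))); first by ring.
  by rewrite hx hy hz; ring.
by rewrite ha hb in hx *; lra.
Qed.

Lemma cross_eq0_scale u v : u != (0, 0) -> cross u v = 0 ->
  exists t, v = (t * u.1, t * u.2).
Proof.
move=> hu hcr; have hn := sqr_norm_neq0 hu; rewrite !subr0 in hn.
exists ((u.1 * v.1 + u.2 * v.2) / (u.1 ^+ 2 + u.2 ^+ 2)).
apply/pairP; split => /=; apply/eqP; rewrite -subr_eq0; apply/eqP.
- transitivity (- u.2 * cross u v / (u.1 ^+ 2 + u.2 ^+ 2)); first by rewrite /cross; field.
  by rewrite hcr; ring.
- transitivity (u.1 * cross u v / (u.1 ^+ 2 + u.2 ^+ 2)); first by rewrite /cross; field.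
  by rewrite hcr; ring.
Qed.

Lemma qev_line q z v t : qev q (z.1 + t * v.1, z.2 + t * v.2) =
  (qa q * v.1 ^+ 2 + qb q * v.1 * v.2 + qc q * v.2 ^+ 2) * t ^+ 2 +
  (2 * qa q * z.1 * v.1 + qb q * (z.1 * v.2 + z.2 * v.1) + 2 * qc q * z.2 * v.2 +
   qd q * v.1 + qe q * v.2) * t + qev q z.
Proof. by rewrite /qev /=; ring. Qed.

(* On the line, [qev q] is a quadratic in [t] with the roots [0], [1] and [t0]. *)
Lemma qev_line_eq0 q z v t0 : t0 != 0 -> t0 != 1 ->
  qev q z = 0 -> qev q (z.1 + v.1, z.2 + v.2) = 0 ->
  qev q (z.1 + t0 * v.1, z.2 + t0 * v.2) = 0 ->
  forall t, qev q (z.1 + t * v.1, z.2 + t * v.2) = 0.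
Proof.
move=> t00 t01 h0 h1 h2 t.
have e1 : (z.1 + v.1, z.2 + v.2) = (z.1 + 1 * v.1, z.2 + 1 * v.2) by rewrite !mul1r.
move: h1 h2; rewrite e1 !qev_line h0 !addr0.
set A := qa q * v.1 ^+ 2 + _ + _.
set B := 2 * qa q * z.1 * v.1 + _ + _ + _ + _ => h1 h2.
have hA : A = 0.
  apply: (mul_eq0_l (b := t0 * (t0 - 1))); last by rewrite mulf_neq0 // subr_eq0.
  transitivity ((A * t0 ^+ 2 + B * t0) - t0 * (A * 1 ^+ 2 + B * 1)); first by ring.
  by rewrite h1 h2; ring.
have hB : B = 0 by move: h1; rewrite hA; lra.
by rewrite hA hB; ring.
Qed.

(* Write [w = z + t v + s v^perp]: the part of [qev q w] independent of [s] vanishes,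
   and the rest is [s] times an affine function of [w]. *)
Lemma qev_factor_line q z v : v != (0, 0) ->
  (forall t, qev q (z.1 + t * v.1, z.2 + t * v.2) = 0) ->
  exists al be ga, forall w, qev q w = cross v (psub w z) * (al * w.1 + be * w.2 + ga).
Proof.
case: q z v => a b c d e f [x1 y1] [v1 v2] hv hline.
have hn : v1 ^+ 2 + v2 ^+ 2 != 0 by have := sqr_norm_neq0 hv; rewrite !subr0.
pose n := v1 ^+ 2 + v2 ^+ 2.
pose D := 2 * a * v1 * (- v2) + b * (v1 * v1 - v2 * v2) + 2 * c * v2 * v1.
pose E := a * v2 ^+ 2 - b * v2 * v1 + c * v1 ^+ 2.
pose F := 2 * a * x1 * (- v2) + b * (x1 * v1 - y1 * v2) + 2 * c * y1 * v1 - d * v2 + e * v1.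
have expand t s : qev (Quad a b c d e f) (x1 + t * v1 - s * v2, y1 + t * v2 + s * v1) =
    qev (Quad a b c d e f) (x1 + t * v1, y1 + t * v2) + s * (D * t + E * s + F).
  by rewrite /qev /D /E /F /=; ring.
exists ((D * v1 - E * v2) / n ^+ 2), ((D * v2 + E * v1) / n ^+ 2),
  (F / n - (D * v1 - E * v2) / n ^+ 2 * x1 - (D * v2 + E * v1) / n ^+ 2 * y1).
case=> x y; pose t := (v1 * (x - x1) + v2 * (y - y1)) / n.
pose s := (v1 * (y - y1) - v2 * (x - x1)) / n.
have -> : (x, y) = (x1 + t * v1 - s * v2, y1 + t * v2 + s * v1).
  by apply/pairP; rewrite /t /s /n /=; split; field.
rewrite expand (hline t) add0r /cross /psub /t /s /n /=.
by field.
Qed.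

Lemma qev_collinear_factor q z1 z2 z3 :
  z1 != z2 -> z3 != z1 -> z3 != z2 -> cross (psub z2 z1) (psub z3 z1) = 0 ->
  qev q z1 = 0 -> qev q z2 = 0 -> qev q z3 = 0 ->
  exists al be ga, forall z,
    qev q z = cross (psub z2 z1) (psub z z1) * (al * z.1 + be * z.2 + ga).
Proof.
move=> h12 h31 h32 hcr q1 q2 q3.
have hv : psub z2 z1 != (0, 0).
  by apply: contra_neq h12 => /pairP /= [? ?]; apply/pairP; split; lra.
have [t /pairP [/= e1 e2]] := cross_eq0_scale hv hcr.
have e3 : z3 = (z1.1 + t * (psub z2 z1).1, z1.2 + t * (psub z2 z1).2).
  by move: e1 e2; rewrite /psub /= => e1 e2; apply/pairP; rewrite /=; split; lra.
apply: qev_factor_line hv _; apply: (qev_line_eq0 (t0 := t)) => //=.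
- by apply: contra_neq h31 => t0; rewrite e3 t0; apply/pairP => /=; split; ring.
- by apply: contra_neq h32 => t1; rewrite e3 t1; apply/pairP => /=; split; ring.
- by rewrite -q2; congr qev; apply/pairP => /=; split; ring.
- by rewrite -e3.
Qed.

(* Subtract the multiple of [f] vanishing at the point [z6] collinear with [z1], [z2]:
   the difference factors through that line and an affine function vanishing at the
   three remaining points. *)
Lemma qev_proportional f g (s : seq (R * R)) : no_three_collinear (fun z => qev f z = 0) ->
  uniq s -> (4 < size s)%N -> {in s, forall z, qev f z = 0} -> {in s, forall z, qev g z = 0} ->
  exists l, forall z, qev g z = l * qev f z.
Proof.
case: s => [|z1 [|z2 [|z3 [|z4 [|z5 s]]]]] //= nc + _ hf hg.
rewrite !inE !negb_or => /and5P [/and5P [d12 d13 d14 d15 _] /and4P [d23 d24 d25 _]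
  /and3P [d34 d35 _] /andP [d45 _] _].
have [f1 f2 f3 f4 f5] : [/\ qev f z1 = 0, qev f z2 = 0, qev f z3 = 0, qev f z4 = 0 & qev f z5 = 0].
  by split; apply: hf; rewrite !inE eqxx ?orbT.
have [g1 g2 g3 g4 g5] : [/\ qev g z1 = 0, qev g z2 = 0, qev g z3 = 0, qev g z4 = 0 & qev g z5 = 0].
  by split; apply: hg; rewrite !inE eqxx ?orbT.
pose z6 := (2 * z2.1 - z1.1, 2 * z2.2 - z1.2).
have d61 : z6 != z1 by apply: contra_neq d12 => /pairP [] /= e1 e2; apply/pairP; split; lra.
have d62 : z6 != z2 by apply: contra_neq d12 => /pairP [] /= e1 e2; apply/pairP; split; lra.
have c6 : cross (psub z2 z1) (psub z6 z1) = 0 by rewrite /cross /psub /z6 /=; ring.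
have f6 : qev f z6 != 0.
  by apply/eqP => f6; have := nc _ _ _ f1 f2 f6 d12 d61 d62; rewrite c6 eqxx.
exists (qev g z6 / qev f z6) => z.
pose r := qlin g (qev g z6 / qev f z6) f.
have r0 w : qev f w = 0 -> qev g w = 0 -> qev r w = 0 by move=> fw gw; rewrite qlinE fw gw; ring.
have r6 : qev r z6 = 0 by rewrite qlinE; field.
have [al [be [ga hr]]] := qev_collinear_factor d12 d61 d62 c6 (r0 _ f1 g1) (r0 _ f2 g2) r6.
have aff w : qev f w = 0 -> qev g w = 0 -> w != z1 -> w != z2 -> al * w.1 + be * w.2 + ga = 0.
  move=> fw gw dw1 dw2; have := nc _ _ _ f1 f2 fw d12 dw1 dw2.
  by move: (r0 _ fw gw); rewrite hr => /mul_eq0_r.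
have [d31 d41 d51 d32] : [/\ z3 != z1, z4 != z1, z5 != z1 & z3 != z2] by split; rewrite eq_sym.
have [d42 d52 d53 d54] : [/\ z4 != z2, z5 != z2, z5 != z3 & z5 != z4] by split; rewrite eq_sym.
have nc345 := nc _ _ _ f3 f4 f5 d34 d53 d54.
have h0 := affine_eq0_of_noncollinear nc345
  (aff _ f3 g3 d31 d32) (aff _ f4 g4 d41 d42) (aff _ f5 g5 d51 d52) z.
by move: (hr z); rewrite qlinE h0 mulr0 => /eqP; rewrite subr_eq0 => /eqP.
Qed.

End PlaneQuadrics.

(** * Conics given by bivariate polynomials *)

Section ConicPolynomials.
Variable R : realType.

Definition mon (i j : nat) : 'X_{1..2} := [multinom (if k == ord0 then i else j) | k < 2].

Definition quad_monomials : seq 'X_{1..2} :=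
  [seq mon ij.1 ij.2 | ij <- [:: (2, 0); (1, 1); (0, 2); (1, 0); (0, 1); (0, 0)]%N].

Lemma mon_inj : injective (fun ij : nat * nat => mon ij.1 ij.2).
Proof.
case=> i j [i' j'] /= /mnmP e.
have := e ord0; have := e (lift ord0 ord0).
by rewrite !mnmE /= => -> ->.
Qed.

Lemma uniq_quad_monomials : uniq quad_monomials.
Proof. by rewrite map_inj_uniq //; apply: mon_inj. Qed.

Lemma mdeg_lt3_quad_monomials (m : 'X_{1..2}) : (mdeg m < 3)%N -> m \in quad_monomials.
Proof.
rewrite mdegE big_ord_recl big_ord1 /= => hm.
have -> : m = mon (m ord0) (m (lift ord0 ord0)).
  apply/mnmP => k; rewrite mnmE; case: k => [[|[|k]] hk] //=.
  - by congr (m _); apply: val_inj.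
  - by congr (m _); apply: val_inj.
move: hm; set a := m ord0; set b := m _.
case: a => [|[|[|a]]]; case: b => [|[|[|b]]] //= _.
all: by rewrite /quad_monomials !inE eqxx ?orbT.
Qed.

Definition quad_of_mpoly (f : {mpoly R[2]}) : quad R :=
  Quad f@_(mon 2 0) f@_(mon 1 1) f@_(mon 0 2) f@_(mon 1 0) f@_(mon 0 1) f@_(mon 0 0).

Lemma ev_quad_of_mpoly (f : {mpoly R[2]}) : (msize f <= 3)%N ->
  forall z, ev f z = qev (quad_of_mpoly f) z.
Proof.
move=> hs z; rewrite /ev mevalE.
have P : perm_eq (msupp f) [seq m <- quad_monomials | m \in msupp f].
  apply: uniq_perm; first exact: msupp_uniq.
    by rewrite filter_uniq // uniq_quad_monomials.
  move=> m; rewrite mem_filter; case: (boolP (m \in msupp f)) => //= h.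
  by rewrite mdeg_lt3_quad_monomials //; apply: leq_trans (msize_mdeg_lt h) hs.
rewrite (perm_big _ P) big_filter big_mkcond /=.
have mon_term (m : 'X_{1..2}) : (if m \in msupp f then f@_m *
    \prod_i (if i == ord0 then z.1 else z.2) ^+ m i else 0) =
    f@_m * ((z.1 ^+ m ord0) * (z.2 ^+ m (lift ord0 ord0))).
  rewrite big_ord_recl big_ord1 /=.
  by case: ifP => // /negbT /memN_msupp_eq0 ->; rewrite mul0r.
under eq_bigr => m _ do rewrite mon_term.
by rewrite /quad_monomials /= !big_cons big_nil /mon !mnmE /= /qev /=; ring.
Qed.

Lemma mpoly_eq0_of_ev (f : {mpoly R[2]}) : (msize f <= 3)%N -> (forall z, ev f z = 0) -> f = 0.
Proof.
move=> hs h.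
have [h1 h2 h3 h4 [h5 h6]] :=
  qev_eq0_coef (fun z => etrans (esym (ev_quad_of_mpoly hs z)) (h z)).
rewrite /= in h1 h2 h3 h4 h5 h6.
rewrite [f]mpolyE big_seq big1 // => m hm.
have : m \in quad_monomials.
  by apply: mdeg_lt3_quad_monomials; apply: leq_trans (msize_mdeg_lt hm) hs.
rewrite /quad_monomials !inE.
do 5 (case/orP; first by move/eqP ->; rewrite ?h1 ?h2 ?h3 ?h4 ?h5 scale0r).
by move/eqP ->; rewrite h6 scale0r.
Qed.

Lemma msize_conic (C : pt R -> Prop) f : is_conic C -> min_degree_poly C f -> (msize f <= 3)%N.
Proof.
move=> [_ [[g [hg hg2]] _]] [hf hmin].
by have := hmin g hg.1; rewrite hg2 /mdegree; case: (msize f) => [|[|[|[]]]].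
Qed.

Lemma line_through_is_line (z1 z2 : R * R) : z1 != z2 ->
  is_line (fun z => cross (psub z2 z1) (psub z z1) = 0).
Proof.
move=> h12; exists (- (z2.2 - z1.2)), (z2.1 - z1.1), ((z2.2 - z1.2) * z1.1 - (z2.1 - z1.1) * z1.2).
split; last by move=> z; rewrite /line_set /cross /psub /=; split => h; rewrite -h; ring.
apply/pair_neq0; case: (pair_neq h12) => h; [right|left].
  by rewrite subr_eq0 eq_sym.
by rewrite oppr_eq0 subr_eq0 eq_sym.
Qed.

(* A conic through three collinear points contains their line, so it would be the union
   of that line with the zero set of a linear factor. *)
Lemma conic_no_three_collinear (C : pt R -> Prop) f : is_conic C -> min_degree_poly C f ->
  no_three_collinear (fun z => qev (quad_of_mpoly f) z = 0).
Proof.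
move=> hC hmin; have hs := msize_conic hC hmin; case: hC => _ [_ hnot].
move=> z1 z2 z3 q1 q2 q3 d12 d31 d32; apply/eqP => hcr.
have [al [be [ga hr]]] := qev_collinear_factor d12 d31 d32 hcr q1 q2 q3.
pose L := fun z => cross (psub z2 z1) (psub z z1) = 0.
have hL : is_line L := line_through_is_line d12.
have CE z : C z <-> L z \/ al * z.1 + be * z.2 + ga = 0.
  rewrite (hmin.1.2 z) /zset ev_quad_of_mpoly // hr /L; split.
    by move/eqP; rewrite mulf_eq0 => /orP [/eqP|/eqP]; [left|right].
  by case=> ->; rewrite ?mul0r ?mulr0.
apply: hnot; case: (eqVneq (al, be) (0, 0)) => [/pairP [/= ha hb]|hab]; last first.
  by exists L, (line_set al be ga); do !split => //; exists al, be, ga.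
case: (eqVneq ga 0) => hg.
  case/eqP: hmin.1.1; apply: mpoly_eq0_of_ev => // z.
  by rewrite ev_quad_of_mpoly // hr ha hb hg; ring.
exists L, L; split => //; split => // z; rewrite CE ha hb !mul0r !add0r; split; last by case=> h; left.
by case=> h; [left|move/eqP: hg; rewrite h].
Qed.

End ConicPolynomials.

(** * Binary quadratic forms *)

Section BinaryForms.
Variable R : rcfType.
Variables k11 k12 k22 : R.
Implicit Types (u v : R * R).

Definition qform u := k11 * u.1 ^+ 2 + 2 * k12 * u.1 * u.2 + k22 * u.2 ^+ 2.

Lemma qform_scale s u : qform (s * u.1, s * u.2) = s ^+ 2 * qform u.
Proof. by rewrite /qform /=; ring. Qed.

Lemma qform_definite_eq0 u : 0 < k11 * k22 - k12 ^+ 2 -> qform u = 0 -> u = (0, 0).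
Proof.
case: u => u1 u2 hpos /= hq.
have hk : k11 != 0.
  by apply: contraTneq hpos => ->; rewrite mul0r sub0r oppr_gt0 -leNgt sqr_ge0.
have h : (k11 * u1 + k12 * u2) ^+ 2 + (k11 * k22 - k12 ^+ 2) * u2 ^+ 2 = 0.
  by rewrite -(mulr0 k11) -hq /qform /=; ring.
have h2 : u2 = 0.
  have ge1 : 0 <= (k11 * k22 - k12 ^+ 2) * u2 ^+ 2 by rewrite mulr_ge0 ?sqr_ge0 // ltW.
  have ge2 : 0 <= (k11 * u1 + k12 * u2) ^+ 2 by rewrite sqr_ge0.
  have : (k11 * k22 - k12 ^+ 2) * u2 ^+ 2 = 0 by lra.
  by move/mul_eq0_r => /(_ (lt0r_neq0 hpos)) /eqP; rewrite sqrf_eq0 => /eqP.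
have h1 : u1 = 0.
  have : (k11 * u1) ^+ 2 = 0 by move: h; rewrite h2; nra.
  by move/eqP; rewrite sqrf_eq0 mulf_eq0 (negbTE hk) => /eqP.
by rewrite h1 h2.
Qed.

Lemma qform_isotropic : k11 * k22 - k12 ^+ 2 < 0 -> exists2 u, u != (0, 0) & qform u = 0.
Proof.
move=> hneg; case: (eqVneq k11 0) => hk.
  by exists (1, 0); [rewrite xpair_eqE oner_eq0|rewrite /qform hk /=; ring].
exists (- k12 + Num.sqrt (k12 ^+ 2 - k11 * k22), k11); first by rewrite xpair_eqE negb_and hk orbT.
have hs : Num.sqrt (k12 ^+ 2 - k11 * k22) ^+ 2 = k12 ^+ 2 - k11 * k22.
  by rewrite sqr_sqrtr // subr_ge0 ltW // -subr_lt0.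
apply: (mul_eq0_r (a := k11)) => //.
by rewrite /qform /=; nra.
Qed.

Section Degenerate.
Hypothesis hdeg : k11 * k22 = k12 ^+ 2.

Lemma qform_degenerate_kernel u : qform u = 0 ->
  k11 * u.1 + k12 * u.2 = 0 /\ k12 * u.1 + k22 * u.2 = 0.
Proof.
case: u => u1 u2 /= hq.
have i1 : (k11 * u1 + k12 * u2) ^+ 2 = 0.
  transitivity (k11 * qform (u1, u2) - (k11 * k22 - k12 ^+ 2) * u2 ^+ 2).
    by rewrite /qform /=; ring.
  by rewrite hq hdeg subrr; ring.
have i2 : (k12 * u1 + k22 * u2) ^+ 2 = 0.
  transitivity (k22 * qform (u1, u2) - (k11 * k22 - k12 ^+ 2) * u1 ^+ 2).
    by rewrite /qform /=; ring.
  by rewrite hq hdeg subrr; ring.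
by split; apply/eqP; rewrite -sqrf_eq0; apply/eqP.
Qed.

Lemma qform_kernel_line : ~ [/\ k11 = 0, k12 = 0 & k22 = 0] ->
  exists2 w : R * R, w != (0, 0) & [/\ k11 * w.1 + k12 * w.2 = 0, k12 * w.1 + k22 * w.2 = 0 &
    forall x : R * R, k11 * x.1 + k12 * x.2 = 0 -> k12 * x.1 + k22 * x.2 = 0 ->
      cross w x = 0].
Proof.
move=> hK; case: (eqVneq (k11, k12) (0, 0)) => [/pairP [/= h11 h12]|hne].
  exists (- k22, k12); first by apply/eqP => /pairP [/= a b]; apply: hK; split => //; lra.
  split => /=; [by rewrite h11 h12; ring|by ring|].
  by move=> x _ hx; rewrite /cross /= -[RHS]oppr0 -hx; ring.
exists (- k12, k11); first by apply: contra_neq hne => /pairP [/= a ->]; congr pair; lra.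
split => /=; [by ring|by rewrite [k22 * _]mulrC hdeg; ring|].
by move=> x hx _; rewrite /cross /= -[RHS]oppr0 -hx; ring.
Qed.

End Degenerate.
End BinaryForms.

(** * Conics invariant under an affine map *)

Definition affine (R : ringType) (m11 m12 m21 m22 t1 t2 : R) (z : R * R) : R * R :=
  (m11 * z.1 + m12 * z.2 + t1, m21 * z.1 + m22 * z.2 + t2).

Lemma cramer2_eq0 (R : idomainType) (a b c d x y : R) : a * d - b * c != 0 ->
  a * x + b * y = 0 -> c * x + d * y = 0 -> x = 0 /\ y = 0.
Proof.
move=> hd h1 h2; split.
  apply: (mul_eq0_l (b := a * d - b * c)) => //.
  transitivity (d * (a * x + b * y) - b * (c * x + d * y)); first by ring.
  by rewrite h1 h2; ring.
apply: (mul_eq0_l (b := a * d - b * c)) => //.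
transitivity (a * (c * x + d * y) - c * (a * x + b * y)); first by ring.
by rewrite h1 h2; ring.
Qed.

Section AffineMaps.
Variable R : realFieldType.

Lemma singular_kernel (m11 m12 m21 m22 : R) : m11 * m22 - m12 * m21 = 0 ->
  exists2 k : R * R, k != (0, 0) & m11 * k.1 + m12 * k.2 = 0 /\ m21 * k.1 + m22 * k.2 = 0.
Proof.
move=> hdet; have [ha|ha] := eqVneq (- m12, m11) (0, 0); last first.
  by exists (- m12, m11) => //=; split; [ring|rewrite -[RHS]hdet; ring].
have [hb|hb] := eqVneq (- m22, m21) (0, 0); last first.
  by exists (- m22, m21) => //=; split; [rewrite -[RHS]oppr0 -hdet; ring|ring].
move: ha hb => /pairP [/= a b] /pairP [/= c d].
by exists (1, 0); [rewrite xpair_eqE oner_eq0|split => /=; lra].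
Qed.

Lemma affine_into_no_three_collinear (Z : R * R -> Prop) (m11 m12 m21 m22 t1 t2 : R) :
  no_three_collinear Z -> (forall z, Z (affine m11 m12 m21 m22 t1 t2 z)) ->
  forall z, affine m11 m12 m21 m22 t1 t2 z = (t1, t2).
Proof.
move=> nc hZ.
have col u : (m11 * u.1 + m12 * u.2, m21 * u.1 + m22 * u.2) = (0, 0).
  have [//|hu] := eqVneq (m11 * u.1 + m12 * u.2, m21 * u.1 + m22 * u.2) (0, 0).
  have e x : affine m11 m12 m21 m22 t1 t2 (x * u.1, x * u.2) =
      (t1 + x * (m11 * u.1 + m12 * u.2), t2 + x * (m21 * u.1 + m22 * u.2)).
    by apply/pairP; rewrite /affine /=; split; ring.
  case: (no_three_collinear_progression nc hu (z := (t1, t2))) => /=.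
  - by have := hZ (0 * u.1, 0 * u.2); rewrite e !mul0r !addr0.
  - by have := hZ (1 * u.1, 1 * u.2); rewrite e !mul1r.
  - by rewrite -e.
have /pairP [/= h11 h21] := col (1, 0).
have /pairP [/= h12 h22] := col (0, 1).
have [-> ->] : m11 = 0 /\ m21 = 0 by split; lra.
have [-> ->] : m12 = 0 /\ m22 = 0 by split; lra.
by move=> z; apply/pairP; rewrite /affine /=; split; ring.
Qed.

End AffineMaps.

(* In the application [quadfun z = |z - P|^2 - |T z - Q|^2] for [T z = M z + t], whose
   quadratic part is [K = I - M^T M], and its zero set is the conic [C2], which [T] maps
   into itself ([f o T = ga f]). *)
Section InvariantConic.
Variable R : rcfType.
Variables (m11 m12 m21 m22 t1 t2 g1 g2 c0 ga k11 k12 k22 : R).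
Hypothesis hk11 : k11 = 1 - m11 ^+ 2 - m21 ^+ 2.
Hypothesis hk12 : k12 = - (m11 * m12 + m21 * m22).
Hypothesis hk22 : k22 = 1 - m12 ^+ 2 - m22 ^+ 2.
Implicit Types (u v z : R * R).

Local Notation T := (affine m11 m12 m21 m22 t1 t2).
Local Notation qK := (qform k11 k12 k22).
Local Notation "'M' v" := (m11 * v.1 + m12 * v.2, m21 * v.1 + m22 * v.2) (at level 10).

Definition quadfun z := qK z + 2 * g1 * z.1 + 2 * g2 * z.2 + c0.

Hypothesis hdet : m11 * m22 - m12 * m21 != 0.
Hypothesis quadfunT : forall z, quadfun (T z) = ga * quadfun z.
Hypothesis nc : no_three_collinear (fun z => quadfun z = 0).
Variables z1 z2 : R * R.
Hypotheses (hz1 : quadfun z1 = 0) (hz2 : quadfun z2 = 0) (d12 : z1 != z2).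

Let dK := k11 * k22 - k12 ^+ 2.
Let dM := m11 * m22 - m12 * m21.
Let X11 := k11 * m11 ^+ 2 + 2 * k12 * m11 * m21 + k22 * m21 ^+ 2.
Let X22 := k11 * m12 ^+ 2 + 2 * k12 * m12 * m22 + k22 * m22 ^+ 2.
Let X12 := k11 * m11 * m12 + k12 * (m11 * m22 + m21 * m12) + k22 * m21 * m22.

Lemma quadfun_shift z u : quadfun (z.1 + u.1, z.2 + u.2) = quadfun z +
  2 * ((k11 * z.1 + k12 * z.2 + g1) * u.1 + (k12 * z.1 + k22 * z.2 + g2) * u.2) + qK u.
Proof. by rewrite /quadfun /qform /=; ring. Qed.

Lemma affine_shift z u : T (z.1 + u.1, z.2 + u.2) = ((T z).1 + (M u).1, (T z).2 + (M u).2).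
Proof. by apply/pairP; rewrite /affine /=; split; ring. Qed.

Lemma sqr_norm_M v : (M v).1 ^+ 2 + (M v).2 ^+ 2 = v.1 ^+ 2 + v.2 ^+ 2 - qK v.
Proof. by rewrite /qform hk11 hk12 hk22 /=; ring. Qed.

Lemma qform_M v : qK (M v) = ga * qK v.
Proof.
have := quadfunT v; have := quadfunT (- v.1, - v.2); have := quadfunT (0, 0).
by rewrite /quadfun /qform /affine /=; lra.
Qed.

Lemma form_congr : [/\ X11 = ga * k11, X22 = ga * k22 & X12 = ga * k12].
Proof.
have := qform_M (1, 0); have := qform_M (0, 1); have := qform_M (1, 1).
by rewrite /qform /X11 /X22 /X12 /=; split; lra.
Qed.

Lemma det_id_sub_form : dM ^+ 2 = (1 - k11) * (1 - k22) - k12 ^+ 2.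
Proof. by rewrite /dM hk11 hk12 hk22; ring. Qed.

Lemma det_congr : X11 * X22 - X12 ^+ 2 = dM ^+ 2 * dK.
Proof. by rewrite /X11 /X22 /X12 /dM /dK; ring. Qed.

Lemma det_congr_addI :
  (X11 + (1 - k11)) * (X22 + (1 - k22)) - (X12 - k12) ^+ 2 =
  dM ^+ 2 * ((k11 + 1) * (k22 + 1) - k12 ^+ 2).
Proof. by rewrite /X11 /X22 /X12 /dM hk11 hk12 hk22; ring. Qed.

Lemma det_congr_subI :
  (X11 - (1 - k11)) * (X22 - (1 - k22)) - (X12 + k12) ^+ 2 =
  dM ^+ 2 * ((k11 - 1) * (k22 - 1) - k12 ^+ 2).
Proof. by rewrite /X11 /X22 /X12 /dM hk11 hk12 hk22; ring. Qed.

Lemma form_neq0 : ~ [/\ k11 = 0, k12 = 0 & k22 = 0].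
Proof.
case=> h11 h12 h22.
have hu : psub z2 z1 != (0, 0).
  by apply: contra_neq d12 => /pairP [/= ? ?]; apply/pairP; split; lra.
apply: (no_three_collinear_progression nc hu hz1).
  by rewrite -hz2; congr quadfun; apply/pairP; rewrite /=; split; ring.
by move: hz1 hz2; rewrite /quadfun /qform h11 h12 h22 /=; lra.
Qed.

Section Central.
Hypothesis hdK : dK != 0.

Let o := (- (k22 * g1 - k12 * g2) / dK, - (k11 * g2 - k12 * g1) / dK).

Lemma grad_center : k11 * o.1 + k12 * o.2 + g1 = 0 /\ k12 * o.1 + k22 * o.2 + g2 = 0.
Proof. by move: hdK; rewrite /o /dK /= => ?; split; field. Qed.

Lemma quadfun_center u : quadfun (o.1 + u.1, o.2 + u.2) = quadfun o + qK u.
Proof. by rewrite quadfun_shift; case: grad_center => -> ->; ring. Qed.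

(* A central conic through its center is a point or a pair of lines. *)
Lemma quadfun_center_neq0 : quadfun o != 0.
Proof.
apply/eqP => ho.
have quadfun_rel z : quadfun z = qK (z.1 - o.1, z.2 - o.2).
  by rewrite -[qK _]add0r -ho -quadfun_center; congr quadfun; apply/pairP; rewrite /=; split; ring.
case: (ltrgt0P dK) => [hpos|hneg|]; last by move/eqP: hdK.
  have /pairP [/= a1 a2] := qform_definite_eq0 hpos (etrans (esym (quadfun_rel z1)) hz1).
  have /pairP [/= b1 b2] := qform_definite_eq0 hpos (etrans (esym (quadfun_rel z2)) hz2).
  by move/eqP: d12; apply; apply/pairP; split; lra.
have [u hu qu] := qform_isotropic hneg.
apply: (no_three_collinear_progression nc hu (z := o)) => //.
  by rewrite quadfun_center ho qu addr0.
by rewrite (quadfun_center (2 * u.1, 2 * u.2)) qform_scale ho qu mulr0 addr0.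
Qed.

(* [quadfun] is even about [o], so [quadfun] is even about [T o]: its gradient vanishes at
   [T o], which is therefore the center. *)
Lemma affine_fixes_center : T o = o.
Proof.
pose G1 := k11 * (T o).1 + k12 * (T o).2 + g1.
pose G2 := k12 * (T o).1 + k22 * (T o).2 + g2.
have shift u : quadfun (T o) + 2 * (G1 * (M u).1 + G2 * (M u).2) + qK (M u) =
    ga * (quadfun o + qK u).
  by rewrite -quadfun_center -quadfunT affine_shift quadfun_shift.
have GM v : G1 * (M v).1 + G2 * (M v).2 = 0.
  by have := shift v; have := shift (- v.1, - v.2); rewrite /qform /=; lra.
have [hG1 hG2] : G1 = 0 /\ G2 = 0.
  apply: (cramer2_eq0 (a := m11) (b := m21) (c := m12) (d := m22)).
  - by move: hdet; rewrite [m11 * _]mulrC [m12 * _]mulrC.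
  - by have := GM (1, 0); rewrite /=; lra.
  - by have := GM (0, 1); rewrite /=; lra.
have [e1 e2] : (T o).1 - o.1 = 0 /\ (T o).2 - o.2 = 0.
  case: grad_center => gr1 gr2.
  apply: (cramer2_eq0 (a := k11) (b := k12) (c := k12) (d := k22)).
  - by move: hdK; rewrite /dK expr2.
  - by rewrite -hG1 -[RHS]subr0 -[X in _ = _ - X]gr1 /G1; ring.
  - by rewrite -hG2 -[RHS]subr0 -[X in _ = _ - X]gr2 /G2; ring.
by apply/pairP; split; lra.
Qed.

Lemma central_factor_eq1 : ga = 1.
Proof.
have := quadfunT o; rewrite affine_fixes_center => h.
apply/eqP; rewrite -subr_eq0; apply/eqP; apply: (mul_eq0_l (b := quadfun o)).
  by rewrite mulrBl -h; ring.
exact: quadfun_center_neq0.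
Qed.

(* With [ga = 1], [M^T K M = K] and [K = I - M^T M] force [det K = 0]. *)
Lemma central_false : False.
Proof.
have [x11 x22 x12] := form_congr; rewrite central_factor_eq1 !mul1r in x11 x22 x12.
have hdM : dM ^+ 2 = 1.
  have := det_congr; rewrite x11 x22 x12 -/dK => h.
  apply/eqP; rewrite -subr_eq0; apply/eqP; apply: (mul_eq0_l (b := dK)) => //.
  by rewrite mulrBl -h; ring.
have := det_congr_addI; have := det_congr_subI.
rewrite x11 x22 x12 hdM !mul1r => E3 E2.
by move/eqP: hdK; apply; rewrite /dK; lra.
Qed.

End Central.

Section Parabolic.
Hypothesis hdK : k11 * k22 = k12 ^+ 2.
Variable w : R * R.
Hypotheses (hw : w != (0, 0)) (kw1 : k11 * w.1 + k12 * w.2 = 0) (kw2 : k12 * w.1 + k22 * w.2 = 0).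
Hypothesis kernel_line : forall x : R * R,
  k11 * x.1 + k12 * x.2 = 0 -> k12 * x.1 + k22 * x.2 = 0 -> cross w x = 0.

Lemma quadfun_kernel z s :
  quadfun (z.1 + s * w.1, z.2 + s * w.2) = quadfun z + 2 * s * (g1 * w.1 + g2 * w.2).
Proof.
rewrite (quadfun_shift z (s * w.1, s * w.2)) qform_scale /=.
transitivity (quadfun z + 2 * s * (z.1 * (k11 * w.1 + k12 * w.2) + z.2 * (k12 * w.1 + k22 * w.2) +
  (g1 * w.1 + g2 * w.2)) + s ^+ 2 * (w.1 * (k11 * w.1 + k12 * w.2) + w.2 * (k12 * w.1 + k22 * w.2))).
  by rewrite /qform; ring.
by rewrite kw1 kw2; ring.
Qed.

Lemma grad_kernel_neq0 : g1 * w.1 + g2 * w.2 != 0.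
Proof.
apply/eqP => gw; apply: (no_three_collinear_progression nc hw hz1).
  by rewrite -[w.1]mul1r -[w.2]mul1r quadfun_kernel gw hz1; ring.
by rewrite quadfun_kernel gw hz1; ring.
Qed.

Lemma qform_kernel : qK w = 0.
Proof.
transitivity (w.1 * (k11 * w.1 + k12 * w.2) + w.2 * (k12 * w.1 + k22 * w.2)).
  by rewrite /qform; ring.
by rewrite kw1 kw2; ring.
Qed.

(* [qK (M w) = ga * qK w = 0] puts [M w] on the kernel line of [K]; comparing the linear
   parts of [quadfun] along [w] and [M w] identifies the factor. *)
Lemma M_kernel : M w = (ga * w.1, ga * w.2).
Proof.
have qMw : qK (M w) = 0 by rewrite qform_M qform_kernel mulr0.
have [km1 km2] := qform_degenerate_kernel hdK qMw.
pose t := T (0, 0).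
have gMw : g1 * (M w).1 + g2 * (M w).2 = ga * (g1 * w.1 + g2 * w.2).
  have eT : T w = (t.1 + (M w).1, t.2 + (M w).2).
    by apply/pairP; rewrite /t /affine /=; split; ring.
  have pw : quadfun w = quadfun (0, 0) + 2 * (g1 * w.1 + g2 * w.2).
    by rewrite /quadfun qform_kernel /qform /=; ring.
  have gt : (k11 * t.1 + k12 * t.2 + g1) * (M w).1 + (k12 * t.1 + k22 * t.2 + g2) * (M w).2 =
      g1 * (M w).1 + g2 * (M w).2.
    transitivity (t.1 * (k11 * (M w).1 + k12 * (M w).2) +
      t.2 * (k12 * (M w).1 + k22 * (M w).2) + (g1 * (M w).1 + g2 * (M w).2)); first by ring.
    by rewrite km1 km2; ring.
  by have := quadfunT w; rewrite eT quadfun_shift quadfunT gt qMw pw; lra.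
have [s /pairP [/= e1 e2]] := cross_eq0_scale hw (kernel_line km1 km2).
suff hs : s = ga by apply/pairP; rewrite /= e1 e2 hs.
apply/eqP; rewrite -subr_eq0; apply/eqP; apply: (mul_eq0_l _ grad_kernel_neq0).
by move: gMw; rewrite e1 e2 /=; lra.
Qed.

Lemma parabolic_factor_sqr : ga ^+ 2 = 1.
Proof.
have hn : w.1 ^+ 2 + w.2 ^+ 2 != 0 by have := sqr_norm_neq0 hw; rewrite !subr0.
have := sqr_norm_M w; rewrite qform_kernel subr0 M_kernel /= => h.
apply/eqP; rewrite -subr_eq0; apply/eqP; apply: (mul_eq0_l _ hn).
transitivity ((ga * w.1) ^+ 2 + (ga * w.2) ^+ 2 - (w.1 ^+ 2 + w.2 ^+ 2)); first by ring.
by rewrite h subrr.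
Qed.

(* From [M^T K M = ga K] and [det K = 0]: [ga = 1 - tr K = (det M) ^ 2 >= 0], so
   [ga ^ 2 = 1] gives [ga = 1] and [tr K = 0], which forces [K = 0]. *)
Lemma parabolic_false : False.
Proof.
have [x11 x22 x12] := form_congr.
have ht : k11 + k22 != 0.
  apply/eqP => ht; apply: form_neq0.
  have hk2 : k22 = - k11 by lra.
  have : k11 ^+ 2 + k12 ^+ 2 = 0 by move: hdK; rewrite hk2 => h; rewrite -[RHS]oppr0 -h; ring.
  by case/sqr_add_eq0 => a b; split => //; rewrite hk2 a oppr0.
have E2 : (k11 + k22) * (ga - 1 + (k11 + k22)) = 0.
  have := det_congr_addI; rewrite x11 x22 x12 det_id_sub_form => h.
  transitivity ((ga * k11 + (1 - k11)) * (ga * k22 + (1 - k22)) - (ga * k12 - k12) ^+ 2 -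
    ((1 - k11) * (1 - k22) - k12 ^+ 2) * ((k11 + 1) * (k22 + 1) - k12 ^+ 2) +
    (k11 * k22 - k12 ^+ 2) * (2 + (k11 * k22 - k12 ^+ 2) - (ga - 1) ^+ 2)); first by ring.
  by rewrite h subrr add0r hdK subrr mul0r.
have hg : ga = 1 - (k11 + k22) by have := mul_eq0_r E2 ht; lra.
have gpos : 0 <= ga.
  have -> : ga = dM ^+ 2 by rewrite det_id_sub_form -hdK hg; ring.
  exact: sqr_ge0.
have : ga = 1.
  have : (ga - 1) * (ga + 1) = 0 by have := parabolic_factor_sqr; lra.
  by move/eqP; rewrite mulf_eq0 => /orP [/eqP|/eqP] h; lra.
by move=> h1; move/eqP: ht; apply; lra.
Qed.

End Parabolic.

Lemma invariant_conic_false : False.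
Proof.
have [hd|hd] := eqVneq (k11 * k22) (k12 ^+ 2); last first.
  by apply: central_false; rewrite /dK subr_eq0.
have [w hw [kw1 kw2 kcr]] := qform_kernel_line hd form_neq0.
exact (parabolic_false hd hw kw1 kw2 kcr).
Qed.

End InvariantConic.

(** * Affine maps transferring distances *)

Section SquaredDistance.
Variable R : rcfType.
Implicit Types (u v z c : R * R).

Definition sqdist u v := (u.1 - v.1) ^+ 2 + (u.2 - v.2) ^+ 2.

Lemma sqdistC u v : sqdist u v = sqdist v u.
Proof. by rewrite /sqdist; ring. Qed.

Lemma sqdist_ge0 u v : 0 <= sqdist u v.
Proof. by rewrite addr_ge0 ?sqr_ge0. Qed.

Lemma sqdist_eq0 u v : sqdist u v = 0 -> u = v.
Proof. by case/sqr_add_eq0 => h1 h2; apply/pairP; split; lra. Qed.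

Definition qsqdist c := Quad 1 0 1 (- 2 * c.1) (- 2 * c.2) (c.1 ^+ 2 + c.2 ^+ 2).

Lemma qsqdistE c z : qev (qsqdist c) z = sqdist z c.
Proof. by rewrite /qev /sqdist /=; ring. Qed.

Definition qcomp (q : quad R) (m11 m12 m21 m22 t1 t2 : R) : quad R :=
  let: Quad A B C D E F := q in
  Quad (A * m11 ^+ 2 + B * m11 * m21 + C * m21 ^+ 2)
       (2 * A * m11 * m12 + B * (m11 * m22 + m12 * m21) + 2 * C * m21 * m22)
       (A * m12 ^+ 2 + B * m12 * m22 + C * m22 ^+ 2)
       (2 * A * m11 * t1 + B * (m11 * t2 + m21 * t1) + 2 * C * m21 * t2 + D * m11 + E * m21)
       (2 * A * m12 * t1 + B * (m12 * t2 + m22 * t1) + 2 * C * m22 * t2 + D * m12 + E * m22)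
       (A * t1 ^+ 2 + B * t1 * t2 + C * t2 ^+ 2 + D * t1 + E * t2 + F).

Lemma qcompE q m11 m12 m21 m22 t1 t2 z :
  qev (qcomp q m11 m12 m21 m22 t1 t2) z = qev q (affine m11 m12 m21 m22 t1 t2 z).
Proof. by case: q => A B C D E F; rewrite /qcomp /qev /affine /=; ring. Qed.

Lemma sqdist_transfer (T : R * R -> R * R) Pi Pj Pk Pl :
  (forall z, sqdist z Pi = sqdist (T z) Pj) ->
  (forall z, sqdist z Pi - sqdist (T z) Pj = sqdist z Pk - sqdist (T z) Pl) ->
  sqdist Pi Pk = sqdist Pj Pl.
Proof.
move=> hT hL; have := hL Pk; rewrite hT subrr (_ : sqdist Pk Pk = 0); last by rewrite /sqdist; ring.
move/esym; rewrite sub0r => /eqP; rewrite oppr_eq0 => /eqP /sqdist_eq0 TPk.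
by rewrite sqdistC hT TPk sqdistC.
Qed.

End SquaredDistance.

Section AffineTransfer.
Variable R : rcfType.
Variables (f : quad R) (Pi Pj Pk Pl : R * R) (m11 m12 m21 m22 t1 t2 : R).
Implicit Types (z : R * R).
Local Notation T := (affine m11 m12 m21 m22 t1 t2).

Hypothesis nc : no_three_collinear (fun z => qev f z = 0).
Hypothesis hd1 : sqdist Pi Pk != sqdist Pj Pl.
Hypothesis not_circle : ~ exists2 r, 0 < r & forall z, qev f z = 0 <-> sqdist z Pi = r ^+ 2.
Hypothesis hL : forall z, sqdist z Pi - sqdist (T z) Pj = sqdist z Pk - sqdist (T z) Pl.
Variable s : seq (R * R).
Hypotheses (us : uniq s) (s5 : (4 < size s)%N).
Hypothesis hs : {in s, forall z,
  [/\ qev f z = 0, qev f (T z) = 0 & sqdist z Pi = sqdist (T z) Pj]}.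

Lemma transfer_two_points : exists z1 z2, [/\ z1 != z2, qev f z1 = 0 & qev f z2 = 0].
Proof.
move: us s5 hs; case: s => [|z1 [|z2 s']] //= /andP [+ _] _ hs'.
rewrite inE negb_or => /andP [d12 _]; exists z1, z2; split => //.
  by case: (hs' z1); rewrite ?inE ?eqxx.
by case: (hs' z2); rewrite ?inE ?eqxx ?orbT.
Qed.

Lemma transfer_conic_invariant : exists ga, forall z, qev f (T z) = ga * qev f z.
Proof.
have hf : {in s, forall z, qev f z = 0} by move=> z /hs [].
have hfT : {in s, forall z, qev (qcomp f m11 m12 m21 m22 t1 t2) z = 0}.
  by move=> z /hs [_ h _]; rewrite qcompE.
have [ga hga] := qev_proportional nc us s5 hf hfT.
by exists ga => z; rewrite -qcompE.
Qed.

Lemma transfer_multiple : exists2 mu, mu != 0 &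
  forall z, sqdist z Pi - sqdist (T z) Pj = mu * qev f z.
Proof.
pose q := qlin (qsqdist Pi) 1 (qcomp (qsqdist Pj) m11 m12 m21 m22 t1 t2).
have qE z : qev q z = sqdist z Pi - sqdist (T z) Pj by rewrite qlinE qcompE !qsqdistE mul1r.
have hf : {in s, forall z, qev f z = 0} by move=> z /hs [].
have hq : {in s, forall z, qev q z = 0} by move=> z /hs [_ _ h]; rewrite qE h subrr.
have [mu hmu] := qev_proportional nc us s5 hf hq.
exists mu => [|z]; last by rewrite -qE.
apply: contra_neq hd1 => mu0; apply: (sqdist_transfer (T := T)) => // z.
by apply/eqP; rewrite -subr_eq0 -qE hmu mu0 mul0r.
Qed.

(* If [T] maps everything into the conic it is constant, and the conic is the circle
   about [Pi] through the points at distance [|T z - Pj|]. *)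
Lemma transfer_factor_neq0 ga : (forall z, qev f (T z) = ga * qev f z) -> ga != 0.
Proof.
move=> hga; apply/eqP => ga0.
have hT z : qev f (T z) = 0 by rewrite hga ga0 mul0r.
have Tc := affine_into_no_three_collinear nc hT.
have [mu mu0 hmu] := transfer_multiple.
have onC z : qev f z = 0 <-> sqdist z Pi = sqdist (t1, t2) Pj.
  rewrite -(Tc z); split => [h|/eqP]; first by apply/eqP; rewrite -subr_eq0 hmu h mulr0.
  by rewrite -subr_eq0 hmu mulf_eq0 (negbTE mu0) => /eqP.
have [z1 [z2 [d12 hz1 hz2]]] := transfer_two_points.
apply: not_circle; exists (Num.sqrt (sqdist (t1, t2) Pj)).
  rewrite sqrtr_gt0 lt_def sqdist_ge0 andbT.
  apply: contra_neq d12 => r0; move: hz1 hz2; rewrite !onC r0.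
  by move=> /sqdist_eq0 -> /sqdist_eq0 ->.
by move=> z; rewrite sqr_sqrtr ?onC ?sqdist_ge0.
Qed.

(* A kernel direction [k] of a singular [M] gives the line [z1 + x k] inside the conic. *)
Lemma transfer_det_neq0 ga : (forall z, qev f (T z) = ga * qev f z) -> ga != 0 ->
  m11 * m22 - m12 * m21 != 0.
Proof.
move=> hga ga0; apply/eqP => /singular_kernel [k hk [k1 k2]].
have [z1 [z2 [_ hz1 _]]] := transfer_two_points.
have line x : qev f (z1.1 + x * k.1, z1.2 + x * k.2) = 0.
  apply: (mul_eq0_r (a := ga)) => //; rewrite -hga.
  have -> : T (z1.1 + x * k.1, z1.2 + x * k.2) = T z1.
    apply/pairP; rewrite /affine /=; split.
      by rewrite -[RHS]addr0 -(mulr0 x) -k1; ring.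
    by rewrite -[RHS]addr0 -(mulr0 x) -k2; ring.
  by rewrite hga hz1 mulr0.
apply: (no_three_collinear_progression nc hk hz1); last exact: line.
by have := line 1; rewrite !mul1r.
Qed.

Lemma affine_transfer_false : False.
Proof.
have [ga hga] := transfer_conic_invariant.
have ga0 := transfer_factor_neq0 hga.
have hdet := transfer_det_neq0 hga ga0.
have [mu mu0 hmu] := transfer_multiple.
have [z1 [z2 [d12 hz1 hz2]]] := transfer_two_points.
pose u1 := t1 - Pj.1; pose u2 := t2 - Pj.2.
(* the coefficients of [|z - Pi|^2 - |T z - Pj|^2] *)
pose qfun := quadfun (- Pi.1 - (m11 * u1 + m21 * u2)) (- Pi.2 - (m12 * u1 + m22 * u2))
  (Pi.1 ^+ 2 + Pi.2 ^+ 2 - u1 ^+ 2 - u2 ^+ 2)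
  (1 - m11 ^+ 2 - m21 ^+ 2) (- (m11 * m12 + m21 * m22)) (1 - m12 ^+ 2 - m22 ^+ 2).
have qfunE z : qfun z = mu * qev f z.
  by rewrite -hmu /qfun /quadfun /qform /sqdist /affine /u1 /u2 /=; ring.
have zeros z : qev f z = 0 <-> qfun z = 0.
  rewrite qfunE; split => [->|/eqP]; first by rewrite mulr0.
  by rewrite mulf_eq0 (negbTE mu0) => /eqP.
have nc' : no_three_collinear (fun z => qfun z = 0).
  by move=> a b c ha hb hc; apply: nc; apply/zeros.
have qfunT z : qfun (T z) = ga * qfun z by rewrite !qfunE hga; ring.
by apply: (invariant_conic_false erefl erefl erefl hdet qfunT nc' _ _ d12); apply/zeros.
Qed.

End AffineTransfer.

(** * Counting the solutions *)

Section Solutions.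
Variable R : rcfType.
Implicit Types (u v z : R * R).

Definition dot u v := u.1 * v.1 + u.2 * v.2.
Definition sqn u := u.1 ^+ 2 + u.2 ^+ 2.

Lemma sqdist_eq_linear P Q P' Q' z w :
  sqdist z P = sqdist w P' -> sqdist z Q = sqdist w Q' ->
  dot (psub Q P) z - dot (psub Q' P') w = (sqn Q - sqn P - sqn Q' + sqn P') / 2.
Proof.
move=> e1 e2; apply/eqP; rewrite -subr_eq0; apply/eqP.
transitivity (((sqdist z P - sqdist z Q) - (sqdist w P' - sqdist w Q')) / 2).
  by rewrite /sqdist /dot /psub /sqn /=; field.
by rewrite e1 e2 subrr mul0r.
Qed.

Variables (f : quad R) (Pi Pj Pk Pl Pu Pw : R * R).

Definition sol z z' := [/\ qev f z = 0, qev f z' = 0, sqdist z Pi = sqdist z' Pj,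
  sqdist z Pk = sqdist z' Pl & sqdist z Pu = sqdist z' Pw].

Let c1 := (sqn Pk - sqn Pi - sqn Pl + sqn Pj) / 2.
Let c2 := (sqn Pu - sqn Pi - sqn Pw + sqn Pj) / 2.

Lemma sol_linear1 z z' : sol z z' -> dot (psub Pk Pi) z - dot (psub Pl Pj) z' = c1.
Proof. by case=> _ _ h1 h2 _; apply: sqdist_eq_linear. Qed.

Lemma sol_linear2 z z' : sol z z' -> dot (psub Pu Pi) z - dot (psub Pw Pj) z' = c2.
Proof. by case=> _ _ h1 _ h2; apply: sqdist_eq_linear. Qed.

Section InvertibleCase.
Let b := psub Pl Pj.
Let bb := psub Pw Pj.
Let a := psub Pk Pi.
Let aa := psub Pu Pi.
Let De := cross b bb.
Hypothesis hB : De != 0.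

(* Solving the two linear equations for [z'] by Cramer's rule. *)
Let M11 := (bb.2 * a.1 - b.2 * aa.1) / De.
Let M12 := (bb.2 * a.2 - b.2 * aa.2) / De.
Let M21 := (- bb.1 * a.1 + b.1 * aa.1) / De.
Let M22 := (- bb.1 * a.2 + b.1 * aa.2) / De.
Let T1 := (- bb.2 * c1 + b.2 * c2) / De.
Let T2 := (bb.1 * c1 - b.1 * c2) / De.
Local Notation T := (affine M11 M12 M21 M22 T1 T2).

Lemma sol_affine z z' : sol z z' -> z' = T z.
Proof.
move=> hs; have := sol_linear1 hs; have := sol_linear2 hs.
move: hB; rewrite /M11 /M12 /M21 /M22 /T1 /T2 /De /a /b /aa /bb /cross /dot /psub /affine /=.
move=> hB' l2 l1; apply/pairP; split => /=; apply: (mulfI hB').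
  transitivity ((Pw.2 - Pj.2) * ((Pk.1 - Pi.1) * z.1 + (Pk.2 - Pi.2) * z.2 - c1) -
                (Pl.2 - Pj.2) * ((Pu.1 - Pi.1) * z.1 + (Pu.2 - Pi.2) * z.2 - c2)).
    by rewrite -l1 -l2; ring.
  by field.
transitivity (- (Pw.1 - Pj.1) * ((Pk.1 - Pi.1) * z.1 + (Pk.2 - Pi.2) * z.2 - c1) +
              (Pl.1 - Pj.1) * ((Pu.1 - Pi.1) * z.1 + (Pu.2 - Pi.2) * z.2 - c2)).
  by rewrite -l1 -l2; ring.
by field.
Qed.

Lemma affine_sqdist_diff z :
  sqdist z Pi - sqdist (T z) Pj = sqdist z Pk - sqdist (T z) Pl.
Proof.
have lin : dot a z - dot b (T z) = c1.
  move: hB; rewrite /M11 /M12 /M21 /M22 /T1 /T2 /De /a /b /aa /bb /cross /dot /psub /affine /=.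
  by move=> hB'; field.
apply/eqP; rewrite -subr_eq0; apply/eqP.
transitivity (2 * (dot a z - dot b (T z) - c1)); last by rewrite lin subrr mulr0.
by rewrite /c1 /a /b /sqdist /dot /psub /sqn /=; field.
Qed.

Hypothesis nc : no_three_collinear (fun z => qev f z = 0).
Hypothesis hd1 : sqdist Pi Pk != sqdist Pj Pl.
Hypothesis not_circle : ~ exists2 r, 0 < r & forall z, qev f z = 0 <-> sqdist z Pi = r ^+ 2.

Lemma sol_size_invertible (s : seq ((R * R) * (R * R))) :
  uniq s -> {in s, forall p, sol p.1 p.2} -> (size s <= 4)%N.
Proof.
move=> us hs; rewrite leqNgt; apply/negP => s5.
have us1 : uniq (map fst s).
  by rewrite map_inj_in_uniq // => -[z z'] [y y'] /hs /sol_affine /= -> /hs /sol_affine /= -> ->.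
apply: (affine_transfer_false nc hd1 not_circle affine_sqdist_diff us1); first by rewrite size_map.
move=> z /mapP [[y y'] /hs hy ->] /=; have := hy; rewrite -(sol_affine hy).
by case.
Qed.

End InvertibleCase.

Section SingularCase.
Hypothesis hd1 : sqdist Pi Pk != sqdist Pj Pl.
Hypothesis hd2 : sqdist Pi Pu != sqdist Pj Pw.
Hypothesis hd3 : sqdist Pk Pu != sqdist Pl Pw.

(* A common linear relation among [Pk - Pi, Pu - Pi], [Pl - Pj, Pw - Pj] and [c1, c2]
   puts [Pu] and [Pw] at the same affine position [t] on the lines [Pi Pk] and [Pj Pl];
   then [c2 - t c1 = (t^2 - t) (|Pk - Pi|^2 - |Pl - Pj|^2) / 2] contradicts the three
   distance inequalities. *)
Lemma proportional_configurations_false n1 n2 : n2 != 0 ->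
  n1 * (Pk.1 - Pi.1) + n2 * (Pu.1 - Pi.1) = 0 -> n1 * (Pk.2 - Pi.2) + n2 * (Pu.2 - Pi.2) = 0 ->
  n1 * (Pl.1 - Pj.1) + n2 * (Pw.1 - Pj.1) = 0 -> n1 * (Pl.2 - Pj.2) + n2 * (Pw.2 - Pj.2) = 0 ->
  n1 * c1 + n2 * c2 = 0 -> False.
Proof.
move=> h2 a1 a2 b1 b2 hc; pose t := - n1 / n2.
have ep (x y : R) : n1 * x + n2 * y = 0 -> y = t * x.
  by move=> h; apply: (mulfI h2); rewrite /t; apply/eqP; rewrite -subr_eq0 -h; apply/eqP; field.
have eu1 : Pu.1 = Pi.1 + t * (Pk.1 - Pi.1) by rewrite -(ep _ _ a1); ring.
have eu2 : Pu.2 = Pi.2 + t * (Pk.2 - Pi.2) by rewrite -(ep _ _ a2); ring.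
have ew1 : Pw.1 = Pj.1 + t * (Pl.1 - Pj.1) by rewrite -(ep _ _ b1); ring.
have ew2 : Pw.2 = Pj.2 + t * (Pl.2 - Pj.2) by rewrite -(ep _ _ b2); ring.
have iden : c2 - t * c1 = (t ^+ 2 - t) * (sqdist Pk Pi - sqdist Pl Pj) / 2.
  by rewrite /c2 /c1 /sqn /sqdist eu1 eu2 ew1 ew2; field.
rewrite -(ep _ _ hc) subrr in iden.
have : (t ^+ 2 - t) * (sqdist Pk Pi - sqdist Pl Pj) = 0.
  by move/esym/eqP: iden; rewrite mulf_eq0 invr_eq0 pnatr_eq0 orbF => /eqP.
move/eqP; rewrite mulf_eq0 => /orP [/eqP ht|/eqP hd].
  have : t * (t - 1) = 0 by rewrite -ht; ring.
  move/eqP; rewrite mulf_eq0 => /orP [/eqP t0|/eqP t1].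
    by move/eqP: hd2; apply; rewrite /sqdist eu1 eu2 ew1 ew2 t0; ring.
  by move/eqP: hd3; apply; rewrite /sqdist eu1 eu2 ew1 ew2 (_ : t = 1); [ring|lra].
by move/eqP: hd1; apply; rewrite sqdistC [sqdist Pj Pl]sqdistC; lra.
Qed.

Hypothesis hB : cross (psub Pl Pj) (psub Pw Pj) = 0.

Lemma sol_line : exists al be ga, (al, be) != (0, 0) /\
  forall z z', sol z z' -> al * z.1 + be * z.2 = ga.
Proof.
have hB' : (Pl.1 - Pj.1) * (Pw.2 - Pj.2) - (Pw.1 - Pj.1) * (Pl.2 - Pj.2) = 0.
  by rewrite -hB /cross /psub /=; ring.
have [[n1 n2] hn [k1 k2]] := singular_kernel hB'.
have hn1 : n1 * (Pl.1 - Pj.1) + n2 * (Pw.1 - Pj.1) = 0 by rewrite -k1 /=; ring.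
have hn2 : n1 * (Pl.2 - Pj.2) + n2 * (Pw.2 - Pj.2) = 0 by rewrite -k2 /=; ring.
pose al := n1 * (Pk.1 - Pi.1) + n2 * (Pu.1 - Pi.1).
pose be := n1 * (Pk.2 - Pi.2) + n2 * (Pu.2 - Pi.2).
pose ga := n1 * c1 + n2 * c2.
have key z z' : sol z z' -> al * z.1 + be * z.2 = ga.
  move=> hs; have := sol_linear1 hs; have := sol_linear2 hs.
  rewrite /ga /al /be /dot /psub /= => <- <-.
  transitivity (al * z.1 + be * z.2 -
    ((n1 * (Pl.1 - Pj.1) + n2 * (Pw.1 - Pj.1)) * z'.1 +
     (n1 * (Pl.2 - Pj.2) + n2 * (Pw.2 - Pj.2)) * z'.2)).
    by rewrite hn1 hn2 /al /be; ring.
  by rewrite /al /be; ring.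
have [hab|hab] := eqVneq (al, be) (0, 0); last by exists al, be, ga.
have [ha hb] : al = 0 /\ be = 0 by move/pairP: hab.
have [hg|hg] := eqVneq ga 0; last first.
  exists 1, 0, 0; split; first by rewrite xpair_eqE oner_eq0.
  move=> z z' /(key z z'); rewrite ha hb !mul0r addr0 => /esym/eqP.
  by rewrite (negbTE hg).
have [h2|h2] := eqVneq n2 0; last first.
  by case: (proportional_configurations_false h2 ha hb hn1 hn2 hg).
have h1 : n1 != 0 by move: hn; rewrite h2 xpair_eqE eqxx andbT.
move: ha hb hn1 hn2; rewrite /al /be h2 !mul0r !addr0 => ha hb hn1 hn2.
exfalso; move/eqP: hd1; apply; rewrite /sqdist.
have -> : Pi.1 - Pk.1 = 0 by have := mul_eq0_r ha h1; lra.
have -> : Pi.2 - Pk.2 = 0 by have := mul_eq0_r hb h1; lra.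
have -> : Pj.1 - Pl.1 = 0 by have := mul_eq0_r hn1 h1; lra.
by have -> : Pj.2 - Pl.2 = 0 by have := mul_eq0_r hn2 h1; lra.
Qed.

End SingularCase.

End Solutions.

Lemma uniq_size_le_mul (T : eqType) (s : seq (T * T)) : uniq s ->
  (size s <= size (undup (map fst s)) * size (undup (map snd s)))%N.
Proof.
move=> us; rewrite -(size_allpairs pair); apply: uniq_leq_size us _ => -[x y] hp.
by apply/allpairsP; exists (x, y); rewrite !mem_undup; split => //; apply/mapP; exists (x, y).
Qed.

Lemma line_no_three_collinear (R : realFieldType) (Z : R * R -> Prop) al be ga
    (l : seq (R * R)) : no_three_collinear Z -> (al, be) != (0, 0) ->
  {in l, forall z, Z z /\ al * z.1 + be * z.2 = ga} -> (size (undup l) <= 2)%N.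
Proof.
move=> nc hab hl; rewrite leqNgt; apply/negP => hs.
have sub : {subset undup l <= l} by move=> a; rewrite mem_undup.
move: (undup_uniq l) hs sub; case: (undup l) => [|x [|y [|z u]]] //=.
rewrite !inE !negb_or => /and3P [/and3P [dxy dxz _] /andP [dyz _] _] _ sub.
have [Zx lx] : Z x /\ al * x.1 + be * x.2 = ga by apply/hl/sub; rewrite inE eqxx.
have [Zy ly] : Z y /\ al * y.1 + be * y.2 = ga by apply/hl/sub; rewrite !inE eqxx orbT.
have [Zz lz] : Z z /\ al * z.1 + be * z.2 = ga by apply/hl/sub; rewrite !inE eqxx !orbT.
have := nc _ _ _ Zx Zy Zz dxy; rewrite !(eq_sym z) dxz dyz => /(_ isT isT).
by rewrite (cross_eq0_of_line hab lx ly lz) eqxx.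
Qed.

Section Count.
Variable R : rcfType.
Variables (f : quad R) (Pi Pj Pk Pl Pu Pw : R * R).
Hypothesis nc : no_three_collinear (fun z => qev f z = 0).
Hypothesis hd1 : sqdist Pi Pk != sqdist Pj Pl.
Hypothesis hd2 : sqdist Pi Pu != sqdist Pj Pw.
Hypothesis hd3 : sqdist Pk Pu != sqdist Pl Pw.
Hypothesis not_circle_i :
  ~ exists2 r, 0 < r & forall z, qev f z = 0 <-> sqdist z Pi = r ^+ 2.
Hypothesis not_circle_j :
  ~ exists2 r, 0 < r & forall z, qev f z = 0 <-> sqdist z Pj = r ^+ 2.

Lemma sol_swap z z' : sol f Pi Pj Pk Pl Pu Pw z z' -> sol f Pj Pi Pl Pk Pw Pu z' z.
Proof. by case. Qed.

(* Either one of the two linear systems is invertible, and a fifth solution is excluded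
   by [sol_size_invertible], or both first and second coordinates lie on lines, each
   meeting the conic at most twice. *)
Lemma sol_size (s : seq ((R * R) * (R * R))) : uniq s ->
  {in s, forall p, sol f Pi Pj Pk Pl Pu Pw p.1 p.2} -> (size s <= 4)%N.
Proof.
move=> us hs.
have [hB|hB] := eqVneq (cross (psub Pl Pj) (psub Pw Pj)) 0; last first.
  exact (sol_size_invertible hB nc hd1 not_circle_i us hs).
have us' : uniq [seq (p.2, p.1) | p <- s].
  by rewrite map_inj_uniq // => -[? ?] [? ?] [-> ->].
have hs' : {in [seq (p.2, p.1) | p <- s], forall p, sol f Pj Pi Pl Pk Pw Pu p.1 p.2}.
  by move=> _ /mapP [p /hs hp ->]; apply: sol_swap.
have [hA|hA] := eqVneq (cross (psub Pk Pi) (psub Pu Pi)) 0; last first.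
  rewrite -(size_map (fun p => (p.2, p.1))).
  by apply: (sol_size_invertible hA nc _ not_circle_j us' hs'); rewrite eq_sym.
have [al [be [ga [hab hl]]]] := sol_line f hd1 hd2 hd3 hB.
have [al' [be' [ga' [hab' hl']]]] :
    exists al be ga, (al, be) != (0, 0) /\ forall z z', sol f Pj Pi Pl Pk Pw Pu z z' ->
    al * z.1 + be * z.2 = ga.
  by apply: (sol_line f _ _ _ hA); rewrite eq_sym.
apply: (leq_trans (uniq_size_le_mul us)); apply: (@leq_mul _ _ 2 2).
  apply: (line_no_three_collinear nc hab) => _ /mapP [p hp ->].
  by have := hs p hp; case=> hf *; split => //; apply: hl; exact: hs.
apply: (line_no_three_collinear nc hab') => _ /mapP [p hp ->].
by have := hs p hp; case=> _ hf *; split => //; apply: hl'; apply: sol_swap; exact: hs.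
Qed.

End Count.

Section Bridge.
Variable R : realType.

Lemma sqdist_neq (a b c e : pt R) : dist a b <> dist c e -> sqdist a b != sqdist c e.
Proof. by move=> h; apply/eqP => h'; apply: h; rewrite /dist -/(sqdist a b) h'. Qed.

Lemma conic_not_circle (C : pt R -> Prop) f m (p : 'I_m -> pt R) a :
  defining_poly C f -> (msize f <= 3)%N -> circle_conditions C p ->
  ~ exists2 r, 0 < r & forall z, qev (quad_of_mpoly f) z = 0 <-> sqdist z (p a) = r ^+ 2.
Proof.
move=> [_ hC] hs hcirc [r hr hz].
have hse : seteq C (circle_set (p a).1 (p a).2 r).
  by move=> z; rewrite (hC z) /zset ev_quad_of_mpoly // hz.
by have [/(_ a) + _] := hcirc _ _ _ hr hse; case: (p a).
Qed.

Definition pairs_of (v : R * R * R * R) : (R * R) * (R * R) :=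
  let: (x, y, x', y') := v in ((x, y), (x', y')).

Lemma pairs_of_inj : injective pairs_of.
Proof. by move=> [[[? ?] ?] ?] [[[? ?] ?] ?] /= [-> -> -> ->]. Qed.

End Bridge.

Unset Implicit Arguments.
Set Strict Implicit.

Theorem lemma4p3 (R : realType) (d : nat)
    (C1 C2 : pt R -> Prop) (f1 f2 : {mpoly R[2]})
    (m n : nat) (p : 'I_m -> pt R) (q : 'I_n -> pt R) :
  (1 <= d)%N ->
  irreducible_curve C1 -> irreducible_curve C2 ->
  min_degree_poly C1 f1 -> min_degree_poly C2 f2 ->
  (mdegree f1 <= d)%N -> (mdegree f2 <= d)%N ->
  injective p -> injective q ->
  (forall i, C1 (p i)) -> (forall k, C2 (q k)) ->
  (* (1) *) ~ is_vertical_line C1 -> ~ is_vertical_line C2 ->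
  (* (2) *) (forall i k, p i <> q k) ->
  (* (3),(4) *) circle_conditions C1 q -> circle_conditions C2 p ->
  (* (5),(6) *) line_conditions C1 q -> line_conditions C2 p ->
  forall i j k l u w : 'I_m,
  dist (p i) (p k) <> dist (p j) (p l) ->
  dist (p i) (p u) <> dist (p j) (p w) ->
  dist (p k) (p u) <> dist (p l) (p w) ->
  is_conic C2 ->
  card_le (fun v => Cset f2 (p i) (p j) v /\ Cset f2 (p k) (p l) v /\
                     Cset f2 (p u) (p w) v) 4.
Proof.
(* Only the conic [C2], the minimality of [f2] and condition (3) for [C2] are needed. *)
move=> _ _ _ _ hmin2 _ _ _ _ _ _ _ _ _ _ hcirc2 _ _ i j k l u w dik diu dku hcon s us hsv.
have hs := msize_conic hcon hmin2.
rewrite -(size_map (@pairs_of R)).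
apply (sol_size (conic_no_three_collinear hcon hmin2) (sqdist_neq dik) (sqdist_neq diu)
  (sqdist_neq dku) (conic_not_circle (a := i) hmin2.1 hs hcirc2)
  (conic_not_circle (a := j) hmin2.1 hs hcirc2)).
  by rewrite map_inj_uniq //; apply: pairs_of_inj.
move=> _ /mapP [[[[x y] x'] y'] hv ->].
have [[h1 [h2 h3]] [[_ [_ h4]] [_ [_ h5]]]] := hsv _ hv.
by split; rewrite -?ev_quad_of_mpoly.
Qed.
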